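(* Let $F,G$ be absolutely continuous distribution functions with densities $f,g$, $\overline{F}=1-F$, $\overline{G}=1-G$. Let $X_1,\ldots,X_{n_1}$ be independent random variables such that $P(X_i>x)=[\overline{F}(x)]^{\alpha_i}$ for $i=1,\ldots,p_1$ and $P(X_i>x)=[\overline{G}(x)]^{\alpha_i}$ for $i=p_1+1,\ldots,n_1$; and let $Y_1,\ldots,Y_{n_2}$ be independent random variables such that $P(Y_i>x)=[\overline{F}(x)]^{\beta_i}$ for $i=1,\ldots,p_2$ and $P(Y_i>x)=[\overline{G}(x)]^{\beta_i}$ for $i=p_2+1,\ldots,n_2$, with all $\alpha_i,\beta_i>0$. If $\sum_{i=1}^{p_1}\alpha_i>\sum_{i=1}^{p_2}\beta_i$ and $\sum_{i=p_1+1}^{n_1}\alpha_i>\sum_{i=p_2+1}^{n_2}\beta_i$, then $X_{1:n_1}\leq_{hr}Y_{1:n_2}$.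
   Context: $X_{1:n}=\min(X_1,\ldots,X_n)$. For $X\sim F_X$, $Y\sim F_Y$, $X\leq_{hr}Y$ (hazard rate order) means $\overline{F}_Y(x)/\overline{F}_X(x)$ is increasing in $x$ over the union of the supports. *)

From HB Require Import structures.
From mathcomp Require Import all_boot all_order all_algebra.
From mathcomp Require Import all_classical all_reals all_analysis.
Set Implicit Arguments. Unset Strict Implicit. Unset Printing Implicit Defensive.
Import Order.TTheory GRing.Theory Num.Theory.
Import numFieldNormedType.Exports.
Local Open Scope classical_set_scope.
Local Open Scope ring_scope.

Definition abs_cont_cdf {R : realType} (F f : R -> R) : Prop :=
  [/\ (forall x, 0 <= f x),
      measurable_fun setT f,
      (\int[@lebesgue_measure R]_(t in setT) (f t)%:E = 1%:E)%E &
      (forall x, ((F x)%:E = \int[@lebesgue_measure R]_(t in `]-oo, x]) (f t)%:E)%E)].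

Definition mutually_independent {R : realType} {d : measure_display}
  {Omega : measurableType d} (P : probability Omega R) (n : nat)
  (X : 'I_n -> {RV P >-> R}) : Prop :=
  forall B : 'I_n -> set R, (forall i, measurable (B i)) ->
    P (\bigcap_(i in [set: 'I_n]) (X i @^-1` B i)) =
    (\prod_(i < n) P (X i @^-1` B i))%E.

(* The minimum X_{1:n} (meaningful for n >= 1). *)
Definition rv_min {R : realType} {T : Type} (n : nat) (X : 'I_n -> T -> R)
  (w : T) : R :=
  let vals := [seq X i w | i <- enum 'I_n] in
  \big[Order.min/head 0 vals]_(v <- vals) v.

Definition surv {R : realType} {d : measure_display} {Omega : measurableType d}
  (P : probability Omega R) (Z : Omega -> R) (x : R) : R :=
  fine (P [set w | x < Z w]).

(* Hazard rate order Z1 <=_hr Z2: surv Z2 / surv Z1 is increasing, in the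
   standard zero-safe cross-multiplied form. *)
Definition hr_le {R : realType} {d : measure_display} {Omega : measurableType d}
  (P : probability Omega R) (Z1 Z2 : Omega -> R) : Prop :=
  forall x y : R, x <= y ->
    surv P Z2 x * surv P Z1 y <= surv P Z1 x * surv P Z2 y.

From HB Require Import structures.
From mathcomp Require Import all_boot all_order all_algebra.
From mathcomp Require Import all_classical all_reals all_analysis.
Import Order.TTheory GRing.Theory Num.Theory.
Local Open Scope classical_set_scope.
Local Open Scope ring_scope.

(* By independence, the survival function of a minimum is the product of the
   survival functions, so X_{1:n1} has survival Fbar^A Gbar^B and Y_{1:n2} has
   survival Fbar^A' Gbar^B', where A, B, A', B' are the partial sums of the
   exponents.  The ratio of the second to the first is Fbar^(A'-A) Gbar^(B'-B):
   a product of nonincreasing functions raised to negative powers, hence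
   increasing. *)

Section PowR.
Variable R : realType.

Lemma prod_powR (I : Type) (r : seq I) (P : pred I) (e : I -> R) (u : R) :
  (forall i, P i -> 0 < e i) ->
  \prod_(i <- r | P i) u `^ e i = u `^ (\sum_(i <- r | P i) e i).
Proof.
move=> e_gt0.
pose K (p s : R) := 0 <= s /\ p = u `^ s.
suff [] : K (\prod_(i <- r | P i) u `^ e i) (\sum_(i <- r | P i) e i) by [].
apply: big_rec2; first by split; rewrite ?powRr0.
move=> i p s Pi [s_ge0 ->]; have ei_gt0 := e_gt0 i Pi.
split; first by rewrite addr_ge0 // ltW.
by rewrite powRD // gt_eqF // ltr_pwDl.
Qed.

Lemma ler_powR_cross (u v a b : R) : 0 <= v -> v <= u -> 0 <= b -> b <= a ->
  u `^ b * v `^ a <= u `^ a * v `^ b.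
Proof.
move=> v_ge0 le_vu b_ge0; rewrite le_eqVlt => /predU1P[-> // | lt_ba].
have a_gt0 : 0 < a by apply: le_lt_trans lt_ba.
have [-> | v_neq0] := eqVneq v 0.
  by rewrite powR0 ?gt_eqF // mulr0 mulr_ge0 ?powR_ge0.
have u_neq0 : u != 0.
  by rewrite gt_eqF // (lt_le_trans _ le_vu) // lt_def v_neq0.
have c_gt0 : 0 < a - b by rewrite subr_gt0.
rewrite -[a](subrK b); move: (a - b) c_gt0 => c c_gt0.
rewrite !powRD ?u_neq0 ?v_neq0 ?implybT //.
have le_vcuc : v `^ c <= u `^ c.
  by apply: ge0_ler_powR; rewrite ?nnegrE ?(ltW c_gt0) ?(le_trans v_ge0 le_vu).
by rewrite mulrCA -mulrA ler_wpM2r ?mulr_ge0 ?powR_ge0.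
Qed.

Lemma ler_powR2_cross (u1 v1 u2 v2 a1 b1 a2 b2 : R) :
  0 <= v1 -> v1 <= u1 -> 0 <= v2 -> v2 <= u2 ->
  0 <= b1 -> b1 <= a1 -> 0 <= b2 -> b2 <= a2 ->
  u1 `^ b1 * u2 `^ b2 * (v1 `^ a1 * v2 `^ a2) <=
  u1 `^ a1 * u2 `^ a2 * (v1 `^ b1 * v2 `^ b2).
Proof.
move=> v1_ge0 le_vu1 v2_ge0 le_vu2 b1_ge0 le_ba1 b2_ge0 le_ba2.
rewrite mulrACA [X in _ <= X]mulrACA.
by apply: ler_pM; rewrite ?mulr_ge0 ?powR_ge0 ?ler_powR_cross.
Qed.

End PowR.

Lemma rv_min_gt (R : realType) (T : Type) n (X : 'I_n -> T -> R) w x :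
  (0 < n)%N -> (x < rv_min X w) <-> (forall i, x < X i w).
Proof.
rewrite /rv_min; set vals := map _ _ => n_gt0.
have X_vals i : X i w \in vals by rewrite map_f ?mem_enum.
split=> [lt_x_min i | lt_x_X].
  exact: lt_le_trans lt_x_min (ge_bigmin_seq _ _ xpredT _ (X_vals i) isT).
have lt_x_vals v : v \in vals -> x < v by move=> /mapP[i _ ->].
rewrite big_seq; apply: lt_bigmin => [|v]; last exact: lt_x_vals.
by apply: lt_x_vals; rewrite -nth0 mem_nth // size_map size_enum_ord.
Qed.

Section Survival.
Context {R : realType} {d : measure_display} {Omega : measurableType d}.
Context {P : probability Omega R}.

Lemma surv_rv_min n (X : 'I_n -> {RV P >-> R}) (s : 'I_n -> R) x :
  (0 < n)%N -> mutually_independent X ->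
  (forall i, P [set w | x < X i w] = (s i)%:E) ->
  surv P (rv_min (fun i => (X i : Omega -> R))) x = \prod_(i < n) s i.
Proof.
move=> n_gt0 indepX PX.
have gt_x_itv (Z : Omega -> R) : Z @^-1` `]x, +oo[ = [set w | x < Z w].
  by apply/seteqP; split => w /=; rewrite in_itv /= andbT.
rewrite /surv.
have -> : [set w | x < rv_min (fun i => (X i : Omega -> R)) w] =
    \bigcap_(i in [set: 'I_n]) (X i @^-1` `]x, +oo[).
  apply/seteqP; split=> w /=; rewrite rv_min_gt //.
    by move=> lt_x_X i _ /=; rewrite in_itv /= andbT.
  by move=> lt_x_X i; have /= := lt_x_X i I; rewrite in_itv /= andbT.
rewrite indepX; last by move=> i; exact: measurable_itv.
under eq_bigr do rewrite gt_x_itv PX.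
by rewrite prodEFin.
Qed.

Lemma surv_rv_min_powR {n p} {X : 'I_n -> {RV P >-> R}} {alpha : 'I_n -> R}
    {SF SG : R -> R} x :
  (0 < n)%N -> (forall i, 0 < alpha i) -> mutually_independent X ->
  (forall (i : 'I_n) x, (i < p)%N ->
     P [set w | x < X i w] = (SF x `^ alpha i)%:E) ->
  (forall (i : 'I_n) x, (p <= i)%N ->
     P [set w | x < X i w] = (SG x `^ alpha i)%:E) ->
  surv P (rv_min (fun i => (X i : Omega -> R))) x =
    SF x `^ (\sum_(i < n | (i < p)%N) alpha i) *
    SG x `^ (\sum_(i < n | (p <= i)%N) alpha i).
Proof.
move=> n_gt0 alpha_gt0 indepX PXF PXG.
rewrite (@surv_rv_min _ _ (fun i => if (i < p)%N then SF x `^ alpha i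
                                   else SG x `^ alpha i)) //; last first.
  by move=> i; case: ltnP => [/PXF|/PXG].
rewrite (bigID (fun i : 'I_n => (i < p)%N)) /= -!prod_powR //.
congr (_ * _); apply: eq_big => [i|i]; rewrite -?leqNgt //.
  by move=> ->.
by rewrite leqNgt => /negPf ->.
Qed.

End Survival.

Section AbsContCdf.
Context {R : realType} {F f : R -> R} (cdfF : abs_cont_cdf F f).

Lemma abs_cont_cdf_le1 x : F x <= 1.
Proof.
case: cdfF => f_ge0 mf int_f1 F_int.
rewrite -lee_fin F_int -int_f1 ge0_subset_integral //=.
- by apply/measurable_realfun.measurable_EFinP.
- by move=> t _; rewrite lee_fin.
Qed.

Lemma abs_cont_cdf_nondecreasing : {homo F : x y / x <= y}.
Proof.
case: cdfF => f_ge0 mf _ F_int x y le_xy.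
rewrite -lee_fin !F_int ge0_subset_integral //=; try exact: measurable_itv.
- by apply/measurable_realfun.measurable_EFinP; exact: measurable_funTS.
- by move=> t _; rewrite lee_fin.
- by move=> t /=; rewrite !in_itv /= => /le_trans; apply.
Qed.

End AbsContCdf.

Theorem theorem3 (R : realType) (d : measure_display) (Omega : measurableType d)
  (P : probability Omega R) (F G f g : R -> R)
  (n1 n2 p1 p2 : nat) (alpha : 'I_n1 -> R) (beta : 'I_n2 -> R)
  (X : 'I_n1 -> {RV P >-> R}) (Y : 'I_n2 -> {RV P >-> R}) :
  abs_cont_cdf F f -> abs_cont_cdf G g ->
  (0 < n1)%N -> (0 < n2)%N -> (p1 <= n1)%N -> (p2 <= n2)%N ->
  (forall i, 0 < alpha i) -> (forall i, 0 < beta i) ->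
  mutually_independent X -> mutually_independent Y ->
  (forall (i : 'I_n1) x, (i < p1)%N ->
     P [set w | x < X i w] = ((1 - F x) `^ (alpha i))%:E) ->
  (forall (i : 'I_n1) x, (p1 <= i)%N ->
     P [set w | x < X i w] = ((1 - G x) `^ (alpha i))%:E) ->
  (forall (i : 'I_n2) x, (i < p2)%N ->
     P [set w | x < Y i w] = ((1 - F x) `^ (beta i))%:E) ->
  (forall (i : 'I_n2) x, (p2 <= i)%N ->
     P [set w | x < Y i w] = ((1 - G x) `^ (beta i))%:E) ->
  \sum_(i < n1 | (i < p1)%N) alpha i > \sum_(i < n2 | (i < p2)%N) beta i ->
  \sum_(i < n1 | (p1 <= i)%N) alpha i > \sum_(i < n2 | (p2 <= i)%N) beta i ->
  hr_le P (rv_min (fun i => (X i : Omega -> R)))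
          (rv_min (fun i => (Y i : Omega -> R))).
Proof.
move=> cdfF cdfG n1_gt0 n2_gt0 _ _ alpha_gt0 beta_gt0 indepX indepY
  XF XG YF YG ltF ltG x y le_xy.
rewrite !(surv_rv_min_powR _ n1_gt0 alpha_gt0 indepX XF XG).
rewrite !(surv_rv_min_powR _ n2_gt0 beta_gt0 indepY YF YG).
have beta_ge0 (Q : pred 'I_n2) : 0 <= \sum_(i < n2 | Q i) beta i.
  by apply: sumr_ge0 => i _; exact: ltW.
have le_F := abs_cont_cdf_nondecreasing cdfF x y le_xy.
have le_G := abs_cont_cdf_nondecreasing cdfG x y le_xy.
by apply: ler_powR2_cross; rewrite ?beta_ge0 ?(ltW ltF) ?(ltW ltG) ?subr_ge0
  ?lerD2l ?lerN2 ?le_F ?le_G ?(abs_cont_cdf_le1 cdfF) ?(abs_cont_cdf_le1 cdfG).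
Qed.
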